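(* For $k\in\mathbb Z$ and $a\in\mathbb Z_{\ge0}$ let ${\boldsymbol{\mathsf X}}_k(a)={\boldsymbol{\mathsf x}}_{k+1}(a)+{\boldsymbol{\mathsf y}}_k(a)$. Then for every two-rowed array ${\boldsymbol{\mathsf X}}$ (as in the context): (1) $\mathcal F({\boldsymbol{\mathsf X}}_k(2a))={\boldsymbol{\mathsf X}}_{k+2}(2a)$; (2) $\mathcal F({\boldsymbol{\mathsf X}}+{\boldsymbol{\mathsf X}}_k(2a))=\mathcal F({\boldsymbol{\mathsf X}})+{\boldsymbol{\mathsf X}}_{k+2}(2a)$; (3) $\tilde f({\boldsymbol{\mathsf X}}+{\boldsymbol{\mathsf X}}_k(2a))=\tilde f({\boldsymbol{\mathsf X}})+{\boldsymbol{\mathsf X}}_k(2a)$ (with the convention $0+{\boldsymbol{\mathsf Y}}=0$).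
   Context: A two-rowed array is a family ${\boldsymbol{\mathsf X}}=({\sf x}_k;{\sf y}_k)_{k\in\mathbb Z}$ of non-negative integers with ${\sf x}_k={\sf y}_k=0$ for all but finitely many $k$; sums and differences are componentwise. ${\boldsymbol{\mathsf x}}_k(a)$ (resp. ${\boldsymbol{\mathsf y}}_k(a)$) is the array with ${\sf x}_k=a$ (resp. ${\sf y}_k=a$) and all other entries $0$. For $z\in\mathbb Z_{\ge0}$ write $z=2\,\mathrm{quo}(z)+\mathrm{rem}(z)$ with $\mathrm{rem}(z)\in\{0,1\}$. The map $\mathcal F$: given ${\boldsymbol{\mathsf X}}=({\sf x}_k;{\sf y}_k)$, put for all $k\in\mathbb Z$: ${\sf y}'_k=\mathrm{rem}({\sf y}_k)+2\,\mathrm{quo}({\sf y}_{k-1})$; ${\sf z}_k=\min\{{\sf x}_k,{\sf y}'_k\}$; ${\sf X}_k={\sf x}_k-{\sf z}_k+{\sf z}_{k-1}$; $\widetilde{\sf Y}_k={\sf y}'_k-{\sf z}_k+{\sf z}_{k-1}$; $\widetilde{\sf X}_k=\mathrm{rem}({\sf X}_k)+2\,\mathrm{quo}({\sf X}_{k-1})$; and $\mathcal F({\boldsymbol{\mathsf X}})=(\widetilde{\sf X}_k;\widetilde{\sf Y}_k)_{k\in\mathbb Z}$. Signature rule: the signature of ${\boldsymbol{\mathsf X}}$ is the finite sequence $\sigma({\boldsymbol{\mathsf X}})=(\cdots\,-^{{\sf y}_{k+1}}\,+^{{\sf x}_{k+1}}\,-^{{\sf y}_k}\,+^{{\sf x}_k}\,-^{{\sf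 y}_{k-1}}\,+^{{\sf x}_{k-1}}\cdots)$ (read left to right with $k$ decreasing; superscripts are multiplicities). Repeatedly cancel a pair $(+,-)$ in which the $+$ is to the left of the $-$ with only canceled symbols between them, until the reduced signature $\overline\sigma({\boldsymbol{\mathsf X}})$ has the form $(-\cdots-+\cdots+)$. If the leftmost $+$ of $\overline\sigma({\boldsymbol{\mathsf X}})$ comes from $+^{{\sf x}_k}$, then $\tilde f{\boldsymbol{\mathsf X}}={\boldsymbol{\mathsf X}}-{\boldsymbol{\mathsf x}}_k(1)+{\boldsymbol{\mathsf y}}_k(1)$; if $\overline\sigma({\boldsymbol{\mathsf X}})$ has no $+$, then $\tilde f{\boldsymbol{\mathsf X}}=0$. *)

From mathcomp Require Import all_boot all_order all_algebra.
From Stdlib Require Import ClassicalEpsilon.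
Set Implicit Arguments. Unset Strict Implicit. Unset Printing Implicit Defensive.
Import Order.TTheory GRing.Theory Num.Theory.

Record arr := Arr { ax : int -> nat; ay : int -> nat }.

Definition bounds (N : nat) (X : arr) : Prop :=
  forall k : int, (N < absz k)%N -> ax X k = 0%N /\ ay X k = 0%N.

Definition finsupp (X : arr) : Prop := exists N, bounds N X.

Definition arr_add (X Y : arr) : arr :=
  Arr (fun k => ax X k + ax Y k)%N (fun k => ay X k + ay Y k)%N.
Definition arr_sub (X Y : arr) : arr :=
  Arr (fun k => ax X k - ax Y k)%N (fun k => ay X k - ay Y k)%N.

Definition xarr (k : int) (a : nat) : arr :=
  Arr (fun j => if j == k then a else 0%N) (fun _ => 0%N).
Definition yarr (k : int) (a : nat) : arr :=
  Arr (fun _ => 0%N) (fun j => if j == k then a else 0%N).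

Definition Xarr (k : int) (a : nat) : arr := arr_add (xarr (k + 1)%R a) (yarr k a).

Definition quo (z : nat) : nat := z./2.
Definition rem (z : nat) : nat := odd z.

Definition Fmap (X : arr) : arr :=
  let y' := fun k => (rem (ay X k) + 2 * quo (ay X (k - 1)%R))%N in
  let z := fun k => minn (ax X k) (y' k) in
  let Xk := fun k => (ax X k - z k + z (k - 1)%R)%N in
  let Yt := fun k => (y' k - z k + z (k - 1)%R)%N in
  let Xt := fun k => (rem (Xk k) + 2 * quo (Xk (k - 1)%R))%N in
  Arr Xt Yt.

(* Signature symbols: (true, k) is a "+" coming from x_k, (false, k) a "-"
   coming from y_k.  The signature over the window [-N, N], read left to right
   with k decreasing: ... -^{y_k} +^{x_k} ... *)
Definition window (N : nat) : seq int :=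
  [seq (N%:Z - i%:Z)%R | i <- iota 0 (N + N).+1].

Definition signature_win (N : nat) (X : arr) : seq (bool * int) :=
  flatten [seq nseq (ay X k) (false, k) ++ nseq (ax X k) (true, k) | k <- window N].

Fixpoint cancel1 (s : seq (bool * int)) : option (seq (bool * int)) :=
  match s with
  | a :: ((b :: t) as t') =>
      if a.1 && ~~ b.1 then Some t else omap (cons a) (cancel1 t')
  | _ => None
  end.

Fixpoint reduce_iter (n : nat) (s : seq (bool * int)) : seq (bool * int) :=
  match n with
  | 0 => s
  | n'.+1 => match cancel1 s with Some s' => reduce_iter n' s' | None => s end
  end.

(* Repeat the cancellation until no (+,-) pair remains (at most size s steps). *)
Definition reduce (s : seq (bool * int)) := reduce_iter (size s) s.

(* A canonical bound of the support (meaningful when X has finite support). *)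
Definition supp_bound (X : arr) : nat :=
  epsilon (inhabits 0%N) (fun N => bounds N X).

Definition reduced_signature (X : arr) : seq (bool * int) :=
  reduce (signature_win (supp_bound X) X).

(* f~ : None stands for 0. *)
Definition ftilde (X : arr) : option arr :=
  match [seq p <- reduced_signature X | p.1] with
  | p :: _ => Some (arr_add (arr_sub X (xarr p.2 1)) (yarr p.2 1))
  | [::] => None
  end.

(* Even amounts
   change only quotients, never remainders, so every intermediate quantity of F
   (y', z, X, Y~, X~) is shifted by a block that F simply translates by two.
   In the signature of X + X_k(b) the new +^b closes the block of k+1 and the new -^b opens
   the block of k; being adjacent they cancel, so the reduced signature, and
   hence the position flipped by f~, is unchanged (for any b, even or not). *)
From Pilot Require Import Defs.
From mathcomp Require Import all_boot all_order all_algebra zify.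
From Stdlib Require Import FunctionalExtensionality ClassicalEpsilon.
Import Order.TTheory GRing.Theory Num.Theory.
Set Implicit Arguments. Unset Strict Implicit. Unset Printing Implicit Defensive.

(* The reduced signature computed right to left: each symbol is pushed onto
   the reduced suffix, cancelling with its head if it forms a pair (+,-). *)
Definition push_sig (a : bool * int) (t : seq (bool * int)) :=
  if t is b :: t' then (if a.1 && ~~ b.1 then t' else a :: t) else [:: a].
Definition nf_sig (s : seq (bool * int)) := foldr push_sig [::] s.

Lemma push_sig_minus u b : b.1 = false -> push_sig b u = b :: u.
Proof. by case: u => [|c u] //= ->. Qed.

Lemma cancel1_cons a b t : cancel1 (a :: b :: t) =
  if a.1 && ~~ b.1 then Some t else omap (cons a) (cancel1 (b :: t)).
Proof. by []. Qed.

Lemma cancel1_nf_sig s s' : cancel1 s = Some s' -> nf_sig s' = nf_sig s.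
Proof.
elim: s s' => [|a [|b t] IH] s' //; rewrite cancel1_cons.
case: ifP => [/andP [Ha Hb] [<-] | _].
  by rewrite [nf_sig (a :: _)]/= (push_sig_minus _ (negbTE Hb)) /push_sig Ha Hb.
by case E: (cancel1 (b :: t)) => [s''|] //= [<-] /=; rewrite (IH _ E).
Qed.

Lemma cancel1_none_nf_sig s : cancel1 s = None -> nf_sig s = s.
Proof.
elim: s => [|a [|b t] IH] //; rewrite cancel1_cons.
case H: (a.1 && ~~ b.1) => //.
case E: (cancel1 (b :: t)) => //= _.
by move: (IH E); rewrite [nf_sig _]/= => ->; rewrite /push_sig H.
Qed.

Lemma size_cancel1 s s' : cancel1 s = Some s' -> size s = (size s').+2.
Proof.
elim: s s' => [|a [|b t] IH] s' //; rewrite cancel1_cons.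
case: ifP => _; first by move=> [<-].
by case E: (cancel1 (b :: t)) => [s''|] //= [<-] /=; move: (IH _ E) => /= ->.
Qed.

Lemma reduce_iterE n s : (size s <= n)%N -> reduce_iter n s = nf_sig s.
Proof.
elim: n s => [|n IH] s /=; first by case: s.
case E: (cancel1 s) => [s'|] Hs; last by rewrite cancel1_none_nf_sig.
rewrite IH ?(cancel1_nf_sig E) //.
by move: Hs; rewrite (size_cancel1 E) ltnS; apply: leqW.
Qed.

Lemma reduceE s : reduce s = nf_sig s.
Proof. exact: reduce_iterE. Qed.

Lemma nf_sig_cat u v : nf_sig (u ++ v) = foldr push_sig (nf_sig v) u.
Proof. by rewrite /nf_sig foldr_cat. Qed.

Lemma nf_sig_nseq_minus n q v :
  q.1 = false -> nf_sig (nseq n q ++ v) = nseq n q ++ nf_sig v.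
Proof. by move=> Hq; elim: n => [|n IH] //=; rewrite IH push_sig_minus. Qed.

Lemma push_nseq_plus n m p q t : p.1 = true -> q.1 = false -> (n <= m)%N ->
  foldr push_sig (nseq m q ++ t) (nseq n p) = nseq (m - n) q ++ t.
Proof.
move=> Hp Hq; elim: n => [|n IH] Hnm /=; first by rewrite subn0.
rewrite IH ?(ltnW Hnm) // -[(m - n)%N](@subnSK n m) //=.
by rewrite Hp Hq.
Qed.

Lemma nf_sig_cancel_block u n p q v : p.1 = true -> q.1 = false ->
  nf_sig (u ++ nseq n p ++ nseq n q ++ v) = nf_sig (u ++ v).
Proof.
move=> Hp Hq; rewrite !nf_sig_cat; congr foldr.
by rewrite -nf_sig_cat nf_sig_nseq_minus // push_nseq_plus // subnn.
Qed.

Lemma nf_sig_subset s : {subset nf_sig s <= s}.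
Proof.
elim: s => [|a t IH] //= x Hx.
have : x \in a :: nf_sig t.
  move: Hx; rewrite /push_sig; case: (nf_sig t) => [|b t'] //.
  by case: ifP => _ // H; rewrite !inE H !orbT.
by rewrite !inE => /orP [-> //|/IH ->]; rewrite orbT.
Qed.

Lemma rem_addr_double y c : Defs.rem (y + 2 * c) = Defs.rem y.
Proof. by rewrite /Defs.rem oddD mul2n odd_double addbF. Qed.

Lemma quo_addr_double y c : quo (y + 2 * c) = (quo y + c)%N.
Proof. by rewrite /quo halfD mul2n odd_double andbF doubleK. Qed.

Definition yshift X j := (Defs.rem (ay X j) + 2 * quo (ay X (j - 1)%R))%N.
Definition zmin X j := minn (ax X j) (yshift X j).
Definition xmove X j := (ax X j - zmin X j + zmin X (j - 1)%R)%N.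
Definition ymove X j := (yshift X j - zmin X j + zmin X (j - 1)%R)%N.
Definition xshift X j := (Defs.rem (xmove X j) + 2 * quo (xmove X (j - 1)%R))%N.

Lemma FmapE X : Fmap X = Arr (xshift X) (ymove X).
Proof. by []. Qed.

Lemma eq_subr1 (j k : int) : (j - 1 == k)%R = (j == k + 1)%R.
Proof. by apply/eqP/eqP; lia. Qed.

Section FmapAddXarr.
Variables (X : arr) (k : int) (b : nat).
Let X' := arr_add X (Xarr k (2 * b)).
Let bump j := if j == (k + 1)%R then (2 * b)%N else 0%N.

Lemma ax_addXarr j : ax X' j = (ax X j + bump j)%N.
Proof. by rewrite /= addn0. Qed.

Lemma yshift_addXarr j : yshift X' j = (yshift X j + bump j)%N.
Proof.
rewrite /yshift /bump /= -eq_subr1.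
by case: (j == k); case: (j - 1 == k)%R;
  rewrite ?rem_addr_double ?quo_addr_double ?addn0; lia.
Qed.

Lemma zmin_addXarr j : zmin X' j = (zmin X j + bump j)%N.
Proof. by rewrite /zmin yshift_addXarr ax_addXarr addn_minl. Qed.

Lemma xmove_addXarr j : xmove X' j = (xmove X j + bump (j - 1)%R)%N.
Proof.
rewrite /xmove !zmin_addXarr ax_addXarr.
have : (zmin X j <= ax X j)%N by rewrite geq_minl.
lia.
Qed.

Lemma ymove_addXarr j : ymove X' j = (ymove X j + bump (j - 1)%R)%N.
Proof.
rewrite /ymove !zmin_addXarr yshift_addXarr.
have : (zmin X j <= yshift X j)%N by rewrite geq_minr.
lia.
Qed.

Lemma xshift_addXarr j : xshift X' j = (xshift X j + bump (j - 1 - 1)%R)%N.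
Proof.
rewrite /xshift !xmove_addXarr /bump.
by case: (j - 1 - 1 == k + 1)%R; case: (j - 1 == k + 1)%R;
  rewrite ?rem_addr_double ?quo_addr_double ?addn0; lia.
Qed.

End FmapAddXarr.

Lemma Fmap_addXarr X k b :
  Fmap (arr_add X (Xarr k (2 * b))) = arr_add (Fmap X) (Xarr (k + 2)%R (2 * b)).
Proof.
rewrite !FmapE /arr_add /=; congr Arr; apply: functional_extensionality => j.
  rewrite xshift_addXarr addn0.
  by have -> : (j - 1 - 1 == k + 1)%R = (j == k + 2 + 1)%R by apply/eqP/eqP; lia.
rewrite ymove_addXarr add0n.
by have -> : (j - 1 == k + 1)%R = (j == k + 2)%R by apply/eqP/eqP; lia.
Qed.

Lemma Fmap_Xarr k b : Fmap (Xarr k (2 * b)) = Xarr (k + 2)%R (2 * b).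
Proof.
pose O := Arr (fun _ => 0%N) (fun _ => 0%N).
have add0arr Y : arr_add O Y = Y by case: Y.
by rewrite -[Xarr k _]add0arr Fmap_addXarr add0arr.
Qed.

Definition sig_block X j := nseq (ay X j) (false, j) ++ nseq (ax X j) (true, j).

Lemma signature_winE N X :
  signature_win N X = flatten (map (sig_block X) (window N)).
Proof. by []. Qed.

Lemma windowS M : window M.+1 = Posz M.+1 :: window M ++ [:: (- Posz M.+1)%R].
Proof.
rewrite /window.
have -> : ((M.+1 + M.+1).+1 = 1 + ((M + M).+1 + 1))%N by lia.
rewrite iotaD iotaD /= map_cat /=.
congr (_ :: _ :: _); [lia | lia | congr (_ ++ _); last by congr (_ :: _); lia].
rewrite -[(0 + 1).+1]/(1 + 1)%N iotaDl -map_comp; apply: eq_map => i /=; lia.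
Qed.

Lemma bounds_leq N M X : bounds N X -> (N <= M)%N -> bounds M X.
Proof. by move=> H NM j Hj; apply: H; apply: leq_ltn_trans Hj. Qed.

Lemma signature_winS X N M : bounds N X -> (N <= M)%N ->
  signature_win M.+1 X = signature_win M X.
Proof.
move=> HN NM; rewrite !signature_winE windowS /= map_cat flatten_cat /=.
have [|x0 y0] := HN (Posz M.+1); first by rewrite ltnS.
have [|x1 y1] := HN (- Posz M.+1)%R; first by rewrite abszN ltnS.
by rewrite /sig_block x0 y0 x1 y1 /= cats0.
Qed.

Lemma signature_win_leq X N M : bounds N X -> (N <= M)%N ->
  signature_win M X = signature_win N X.
Proof.
move=> HN; elim: M => [|M IH] NM; first by move: NM; rewrite leqn0 => /eqP ->.
case: (ltngtP N M.+1) NM => // [NM _|<- //].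
by rewrite (signature_winS HN) ?IH.
Qed.

Lemma reduced_signatureE X N : bounds N X ->
  reduced_signature X = nf_sig (signature_win N X).
Proof.
move=> HN; have HS : bounds (supp_bound X) X.
  exact: (epsilon_spec (inhabits 0%N) (fun N => bounds N X) (ex_intro _ N HN)).
rewrite /reduced_signature reduceE.
by rewrite -(signature_win_leq HS (leq_maxl _ N)) (signature_win_leq HN (leq_maxr _ N)).
Qed.

Lemma mem_signature_win_plus N X p :
  p \in signature_win N X -> p.1 -> (0 < ax X p.2)%N.
Proof.
move/flattenP => [s /mapP [j _ ->]].
by rewrite mem_cat !mem_nseq => /orP [/andP [_ /eqP -> //] | /andP [H /eqP -> _]].
Qed.

Lemma window_split M k : (absz k < M)%N ->
  exists w1 w2, window M = w1 ++ (k + 1)%R :: k :: w2 /\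
    {in w1 ++ w2, forall j, j != k /\ j != (k + 1)%R}.
Proof.
move=> HM; pose f i := (Posz M - Posz i)%R.
pose d := absz (Posz M - (k + 1))%R.
pose r := ((M + M).+1 - (d + 2))%N.
have hlen : (M + M).+1 = (d + (2 + r))%N by rewrite /r /d; lia.
exists (map f (iota 0 d)), (map f (iota (d + 2) r)); split.
  rewrite /window hlen !iotaD !map_cat add0n.
  by congr (_ ++ _); rewrite /= /f; congr (_ :: _ :: _); rewrite /d; lia.
move=> j; rewrite mem_cat => /orP [] /mapP [i]; rewrite mem_iota => Hi ->;
  by split; apply/eqP; rewrite /f /d; move: Hi; rewrite /r; lia.
Qed.

Section SignatureAddXarr.
Variables (X : arr) (k : int) (b : nat).
Let X' := arr_add X (Xarr k b).

Lemma sig_block_addXarr j :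
  j != k -> j != (k + 1)%R -> sig_block X' j = sig_block X j.
Proof. by move=> /negbTE H1 /negbTE H2; rewrite /sig_block /X' /= H1 H2 !addn0. Qed.

Lemma sig_block_addXarr_succ : sig_block X' (k + 1)%R =
  sig_block X (k + 1)%R ++ nseq b (true, (k + 1)%R).
Proof.
rewrite /sig_block /X' /= eqxx.
have -> : ((k + 1)%R == k) = false by apply/eqP; lia.
by rewrite !addn0 nseqD catA.
Qed.

Lemma sig_block_addXarr_self : sig_block X' k = nseq b (false, k) ++ sig_block X k.
Proof.
rewrite /sig_block /X' /= eqxx.
have -> : (k == (k + 1)%R) = false by apply/eqP; lia.
by rewrite !addn0 addnC nseqD catA.
Qed.

Lemma nf_signature_addXarr M : (absz k < M)%N ->
  nf_sig (signature_win M X') = nf_sig (signature_win M X).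
Proof.
move=> /window_split [w1 [w2 [Ew Hw]]].
have Eblk w : {subset w <= w1 ++ w2} -> map (sig_block X') w = map (sig_block X) w.
  by move=> Hsub; apply/eq_in_map => j /Hsub /Hw [? ?]; apply: sig_block_addXarr.
rewrite !signature_winE Ew !map_cat /= !Eblk => [|j Hj|j Hj];
  rewrite ?mem_cat ?Hj ?orbT //.
rewrite sig_block_addXarr_succ sig_block_addXarr_self !flatten_cat /= -!catA.
by rewrite (catA (flatten _)) (catA (_ ++ _)) nf_sig_cancel_block // -!catA.
Qed.

End SignatureAddXarr.

Definition flip_arr X q := arr_add (arr_sub X (xarr q 1)) (yarr q 1).

Lemma ftildeE X : ftilde X =
  if [seq p <- reduced_signature X | p.1] is p :: _ then Some (flip_arr X p.2)
  else None.
Proof. by []. Qed.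

Lemma flip_arr_add X Y q : (0 < ax X q)%N ->
  flip_arr (arr_add X Y) q = arr_add (flip_arr X q) Y.
Proof.
move=> Hq; rewrite /flip_arr /arr_add /arr_sub /=; congr Arr;
  apply: functional_extensionality => j; case: eqP => [->|_] //; lia.
Qed.

Lemma bounds_addXarr M X k b : bounds M X -> (absz k < M)%N ->
  bounds M (arr_add X (Xarr k b)).
Proof.
move=> HX Hk j Hj /=; have [-> ->] := HX j Hj.
have -> : (j == (k + 1)%R) = false by apply/eqP; lia.
by have -> : (j == k) = false by apply/eqP; lia.
Qed.

Lemma ftilde_addXarr X k b : finsupp X ->
  ftilde (arr_add X (Xarr k b)) = omap (arr_add^~ (Xarr k b)) (ftilde X).
Proof.
move=> [N HN]; pose M := maxn N (absz k).+1.
have HX : bounds M X := bounds_leq HN (leq_maxl _ _).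
have Hk : (absz k < M)%N by rewrite leq_max leqnn orbT.
rewrite !ftildeE (reduced_signatureE (bounds_addXarr b HX Hk)).
rewrite (reduced_signatureE HX) nf_signature_addXarr //.
case E: [seq p <- _ | p.1] => [|p t] //=.
have : p \in [seq p <- nf_sig (signature_win M X) | p.1] by rewrite E inE eqxx.
rewrite mem_filter => /andP [Hp1 /nf_sig_subset Hp].
by rewrite flip_arr_add // (mem_signature_win_plus Hp Hp1).
Qed.

Theorem mainTheorem6 (X : arr) (k : int) (a : nat) :
  finsupp X ->
  [/\ Fmap (Xarr k (2 * a)) = Xarr (k + 2)%R (2 * a),
      Fmap (arr_add X (Xarr k (2 * a))) = arr_add (Fmap X) (Xarr (k + 2)%R (2 * a))
    & ftilde (arr_add X (Xarr k (2 * a)))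
      = omap (fun Y => arr_add Y (Xarr k (2 * a))) (ftilde X)].
Proof.
by move=> HX; split; [exact: Fmap_Xarr | exact: Fmap_addXarr | exact: ftilde_addXarr].
Qed.
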